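(* Let $\mathbb{K}$ be a field, $n>1$, $a=\sum_{j=0}^d c_j s^j\in\mathbb{K}[s]^n$ a non-zero row vector of degree $d$, and $A\in\mathbb{K}^{(2d+1)\times n(d+1)}$ the matrix whose $(i,\,kn+r)$ entry ($1\le i\le 2d+1$, $0\le k\le d$, $1\le r\le n$) is the $r$-th entry of $c_{i-1-k}$ (zero if $i-1-k\notin\{0,\dots,d\}$). Let $q$ be the set of non-pivotal indices of $A$. If $j\in q$, then $j+kn\in q$ for all integers $0\le k\le\left\lfloor\frac{n(d+1)-j}{n}\right\rfloor$. Moreover, if $A_{*j}=\sum_{r<j}\alpha_r A_{*r}$ with $\alpha_r\in\mathbb{K}$, then $A_{*j+kn}=\sum_{r<j}\alpha_r A_{*r+kn}$ for all such $k$.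
   Context: $A_{*j}$ denotes the $j$-th column of $A$. A column of a matrix is called pivotal if it is either the first column and non-zero, or it is linearly independent of all previous columns; the other columns are non-pivotal, and their indices are the non-pivotal indices. *)

From mathcomp Require Import all_boot all_order all_algebra.
Set Implicit Arguments. Unset Strict Implicit. Unset Printing Implicit Defensive.
Import GRing.Theory.
Local Open Scope ring_scope.

(* Conventions: all indices are 0-based (row i, column j, coefficient index). *)

Definition polyrow_deg (K : fieldType) (n : nat) (a : 'rV[{poly K}]_n) : nat :=
  \max_(r < n) (size (a ord0 r)).-1.

(* r-th entry (0-based) of the coefficient vector c_m of a = sum_m c_m s^m;
   zero if r is out of range. *)
Definition coefrow (K : fieldType) (n : nat) (a : 'rV[{poly K}]_n) (m r : nat) : K :=
  odflt 0 (omap (fun r' : 'I_n => (a ord0 r')`_m) (insub r)).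

(* The (2d+1) x n(d+1) block Toeplitz matrix: entry (i, k*n + r)
   (0 <= i <= 2d, 0 <= k <= d, 0 <= r < n) is the r-th entry of c_{i-k},
   and zero when i - k < 0 (for i - k > d the coefficient is zero anyway). *)
Definition coefmx (K : fieldType) (n d : nat) (a : 'rV[{poly K}]_n)
  : 'M[K]_((2 * d).+1, n * d.+1) :=
  \matrix_(i < (2 * d).+1, j < n * d.+1)
    (if (j %/ n <= i)%N then coefrow a (i - j %/ n) (j %% n) else 0).

(* Column j (0-based, as a natural number) of A; zero if j is out of range. *)
Definition colx (K : fieldType) (m N : nat) (A : 'M[K]_(m, N)) (j : nat) : 'cV[K]_m :=
  odflt 0 (omap (fun j' : 'I_N => col j' A) (insub j)).

Definition dep_on_prev (K : fieldType) (m N : nat) (A : 'M[K]_(m, N)) (j : nat) : Prop :=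
  exists alpha : nat -> K, colx A j = \sum_(r < j) alpha r *: colx A r.

Definition pivotal (K : fieldType) (m N : nat) (A : 'M[K]_(m, N)) (j : nat) : Prop :=
  (j = 0%N /\ colx A 0 != 0) \/ ~ dep_on_prev A j.

Definition nonpivotal (K : fieldType) (m N : nat) (A : 'M[K]_(m, N)) (j : nat) : Prop :=
  (j < N)%N /\ ~ pivotal A j.

From mathcomp Require Import all_boot all_order all_algebra.
From mathcomp Require Import zify.
Set Implicit Arguments. Unset Strict Implicit.
Import GRing.Theory.
Local Open Scope ring_scope.

(** Shifting the column index of [coefmx d a] by [n] shifts the column down by
    one row, since the entry in row [i], block [k] only depends on [i - k].
    Shifting down is linear, so any linear relation between columns is
    transported by a shift of [k * n] indices; in particular a column that
    depends on its predecessors still does after the shift. *)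

Section ShiftDown.

Variables (K : fieldType) (m : nat).

Definition shift_down (v : 'cV[K]_m.+1) : 'cV[K]_m.+1 :=
  \matrix_(i, l) (if (0 < i)%N then v (inord i.-1) l else 0).

Lemma shift_down_sum (j : nat) (alpha : nat -> K) (v : nat -> 'cV[K]_m.+1) :
  shift_down (\sum_(r < j) alpha r *: v r) = \sum_(r < j) alpha r *: shift_down (v r).
Proof.
apply/matrixP => i l; rewrite !mxE summxE; case: ifP => i_gt0.
  by rewrite summxE; apply: eq_bigr => r _; rewrite !mxE i_gt0.
by rewrite summxE big1 // => r _; rewrite !mxE i_gt0 mulr0.
Qed.

Lemma iter_shift_down_sum (j k : nat) (alpha : nat -> K) (v : nat -> 'cV[K]_m.+1) :
  iter k shift_down (\sum_(r < j) alpha r *: v r) =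
  \sum_(r < j) alpha r *: iter k shift_down (v r).
Proof.
elim: k => [|k IHk] //.
by rewrite iterS IHk (shift_down_sum _ _ (fun r => iter k shift_down (v r))).
Qed.

End ShiftDown.

Lemma colxE (K : fieldType) (m N : nat) (A : 'M[K]_(m, N)) (j : nat) (hj : (j < N)%N) :
  colx A j = col (Ordinal hj) A.
Proof. by rewrite /colx insubT. Qed.

Lemma add_mul_ltn_of_leq_div (N n j k : nat) :
  (j < N)%N -> (k <= (N - j.+1) %/ n)%N -> (j + k * n < N)%N.
Proof.
move=> ltjN le_k; have : (k * n <= N - j.+1)%N.
  by apply: leq_trans (leq_divM _ n); rewrite leq_mul2r le_k orbT.
lia.
Qed.

Lemma sum_scale_shift_index (K : fieldType) (V : lmodType K) (j s : nat)
    (alpha : nat -> K) (v : nat -> V) :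
  \sum_(r < j) alpha r *: v (r + s)%N =
  \sum_(r < j + s) (if (s <= r)%N then alpha (r - s)%N else 0) *: v r.
Proof.
rewrite -(big_mkord xpredT (fun r => alpha r *: v (r + s)%N)).
rewrite -(big_mkord xpredT (fun r => (if (s <= r)%N then alpha (r - s)%N else 0) *: v r)).
rewrite (@big_cat_nat _ _ _ s 0 (j + s)) ?leq_addl //=.
rewrite [X in _ = X + _]big_nat_cond [X in _ = X + _]big1 ?add0r; last first.
  by move=> r /andP [/andP [_ ltrs] _]; rewrite leqNgt ltrs scale0r.
rewrite -{2}[s]add0n big_addn addnK.
by apply: eq_bigr => r _; rewrite leq_addl addnK.
Qed.

Section CoefMatrix.

Variables (K : fieldType) (n d : nat) (a : 'rV[{poly K}]_n).
Hypothesis n_gt0 : (0 < n)%N.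

Local Notation A := (coefmx d a).
Local Notation N := (n * d.+1)%N.

Lemma colx_coefmx_addn (m : nat) :
  (m + n < N)%N -> colx A (m + n) = shift_down (colx A m).
Proof.
move=> ltmnN; have ltmN : (m < N)%N by apply: leq_ltn_trans ltmnN; apply: leq_addr.
rewrite (colxE _ ltmnN) (colxE _ ltmN); apply/matrixP => i l; rewrite !mxE /=.
rewrite divnDr ?dvdnn // divnn n_gt0 modnDr.
case: i => [[|i] lti] /=; first by rewrite addn1.
by rewrite inordK ?addn1 ?ltnS ?subSS // ltnW.
Qed.

Lemma colx_coefmx_add_mul (m k : nat) :
  (m + k * n < N)%N -> colx A (m + k * n) = iter k (@shift_down K (2 * d)) (colx A m).
Proof.
elim: k => [|k IHk] lt_mkN; first by rewrite mul0n addn0.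
rewrite /= -IHk; last by apply: leq_ltn_trans lt_mkN; rewrite leq_add2l leq_mul2r leqnSn orbT.
by rewrite -colx_coefmx_addn -?addnA -?mulSnr.
Qed.

Lemma coefmx_relation_shift (j k : nat) (alpha : nat -> K) :
  (j < N)%N -> (k <= (N - j.+1) %/ n)%N ->
  colx A j = \sum_(r < j) alpha r *: colx A r ->
  colx A (j + k * n) = \sum_(r < j) alpha r *: colx A (r + k * n).
Proof.
move=> ltjN le_k relj; have lt_jkN := add_mul_ltn_of_leq_div ltjN le_k.
rewrite colx_coefmx_add_mul // relj iter_shift_down_sum.
apply: eq_bigr => r _; rewrite colx_coefmx_add_mul //.
by apply: leq_ltn_trans lt_jkN; rewrite leq_add2r ltnW.
Qed.

Lemma dep_on_prev_coefmx_shift (j k : nat) :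
  (j < N)%N -> (k <= (N - j.+1) %/ n)%N ->
  dep_on_prev A j -> dep_on_prev A (j + k * n).
Proof.
move=> ltjN le_k [alpha relj].
exists (fun r => if (k * n <= r)%N then alpha (r - k * n)%N else 0).
by rewrite (coefmx_relation_shift ltjN le_k relj) sum_scale_shift_index.
Qed.

Lemma nonpivotal_coefmx_shift (j k : nat) :
  (k <= (N - j.+1) %/ n)%N -> nonpivotal A j -> nonpivotal A (j + k * n).
Proof.
move=> le_k [ltjN nonpiv_j]; split; first exact: add_mul_ltn_of_leq_div.
move=> [[jk0 col0]|indep]; apply: nonpiv_j.
  by left; split=> //; move/eqP: jk0; rewrite addn_eq0 => /andP [/eqP].
by right=> dep_j; apply/indep/dep_on_prev_coefmx_shift.
Qed.

End CoefMatrix.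

Theorem lemma6 (K : fieldType) (n d : nat) (a : 'rV[{poly K}]_n)
  (hn : (1 < n)%N) (ha : a != 0) (hd : polyrow_deg a = d) :
  let A := coefmx d a in
  (forall j : nat, nonpivotal A j ->
     forall k : nat, (k <= (n * d.+1 - j.+1) %/ n)%N -> nonpivotal A (j + k * n)%N)
  /\
  (forall (j : nat) (alpha : nat -> K), (j < n * d.+1)%N ->
     colx A j = \sum_(r < j) alpha r *: colx A r ->
     forall k : nat, (k <= (n * d.+1 - j.+1) %/ n)%N ->
       colx A (j + k * n)%N = \sum_(r < j) alpha r *: colx A (r + k * n)%N).
Proof.
have n_gt0 : (0 < n)%N by apply: ltnW.
split=> [j nonpiv_j k le_k | j alpha ltjN relj k le_k].
  exact: nonpivotal_coefmx_shift.
exact: coefmx_relation_shift.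
Qed.
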